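(* For $q>0$, $$\tilde\psi(q)=-\frac1q+\tilde\gamma_0+\sum_{k=1}^\infty(-1)^k\left(\frac1k-\frac1{k+q}\right),$$ and the function $$\tilde\Gamma(q)=\frac1q\, e^{\tilde\gamma_0 q}\prod_{k=1}^\infty\left(e^{-\frac qk}\left(1+\frac qk\right)\right)^{(-1)^{k+1}}\qquad(q>0)$$ satisfies the differential equation $\tilde\psi(q)=\frac{d}{dq}\log\tilde\Gamma(q)$.
   Context: For $q>0$, $\zeta_E(z,q)=\sum_{n=0}^\infty (-1)^n (n+q)^{-z}$ for $\mathrm{Re}(z)>0$, extended by analytic continuation to an entire function of $z$. The modified Stieltjes constants $\tilde\gamma_k(q)$ are defined by the Taylor expansion $\zeta_E(z,q)=\sum_{k=0}^\infty\frac{(-1)^k\tilde\gamma_k(q)}{k!}(z-1)^k$; $\tilde\gamma_0:=\tilde\gamma_0(1)=\zeta_E(1,1)$ (the modified Euler constant). The modified digamma function is $\tilde\psi(q):=-\tilde\gamma_0(q)=-\zeta_E(1,q)=-\sum_{n\ge0}\frac{(-1)^n}{n+q}$. The modified gamma function $\tilde\Gamma$ is defined (up to the normalization given by the product) by the differential equation $\frac{d}{dq}\log\tilde\Gamma(q)=\tilde\psi(q)$. *)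

From Stdlib Require Import Reals Lra.
From Coquelicot Require Import Coquelicot.
Open Scope R_scope.

(* zeta_E(1,q) = sum_{n>=0} (-1)^n/(n+q)   (value of the Taylor/Dirichlet series at z=1,
   where the defining series converges since Re z = 1 > 0). *)
Definition zetaE1 (q : R) : R := Series (fun n : nat => (-1) ^ n / (INR n + q)).

Definition gamma0t : R := zetaE1 1.

Definition psit (q : R) : R := - zetaE1 q.

(* k-th factor (k >= 1) of the product: (e^{-q/k}(1+q/k))^{(-1)^{k+1}} *)
Definition gfactor (q : R) (k : nat) : R :=
  powerRZ (exp (- q / INR k) * (1 + q / INR k)) (if Nat.even k then (-1)%Z else 1%Z).

Fixpoint gprod (q : R) (N : nat) : R :=
  match N with
  | O => 1
  | S n => gprod q n * gfactor q (S n)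
  end.

Definition Gammat (q : R) : R := / q * exp (gamma0t * q) * Lim_seq (gprod q).

From Stdlib Require Import Reals Lra Lia.
From Coquelicot Require Import Coquelicot.
Open Scope R_scope.

(* Taking logarithms turns the product into the series with terms
   [(-1)^j (ln (1 + q/(j+1)) - q/(j+1))], which are O(q^2/j^2) because
   [|ln (1 + t) - t| <= t^2]; so the product converges to a positive limit.
   The q-derivatives of these terms are the summands of the series for
   [psi~(q) + 1/q - gamma~_0]; they are O(q/j^2) uniformly near any q > 0, so by
   the Weierstrass M-test the series may be differentiated termwise.  That
   derivative series is the difference of the alternating series defining
   [zeta_E(1,1)] and the shifted [zeta_E(1,q)], and adding the derivative
   [-1/q + gamma~_0] of [ln (e^(gamma~_0 q) / q)] leaves [psi~(q)]. *)

Lemma ex_series_Rabs_le (a b : nat -> R) :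
  (forall n, Rabs (a n) <= b n) -> ex_series b -> ex_series a.
Proof. exact (ex_series_le (V := R_CompleteNormedModule) a b). Qed.

Lemma Series_tail_le (a b : nat -> R) :
  (forall j, Rabs (a j) <= b j) -> ex_series b ->
  forall n, Rabs (Series a - sum_n a n) <= Series b - sum_n b n.
Proof.
  intros Hab Hb n.
  assert (Ha : ex_series a) by (apply (ex_series_Rabs_le a b); assumption).
  rewrite (Series_incr_n a (S n)), (Series_incr_n b (S n)), <- !sum_n_Reals by (auto; lia).
  simpl pred. replace (sum_n a n + _ - sum_n a n) with (Series (fun k => a (S n + k)%nat)) by ring.
  replace (sum_n b n + _ - sum_n b n) with (Series (fun k => b (S n + k)%nat)) by ring.
  assert (Hbt : ex_series (fun k => b (S n + k)%nat)) by (apply ex_series_incr_n; exact Hb).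
  eapply Rle_trans; [apply Series_Rabs | apply Series_le; [| exact Hbt]].
  - apply (ex_series_Rabs_le _ (fun k => b (S n + k)%nat)); [| exact Hbt].
    intros k. rewrite Rabs_Rabsolu. apply Hab.
  - intros k. split; [apply Rabs_pos | apply Hab].
Qed.

Section TermwiseDerivative.

Variables (f f' : nat -> R -> R) (b : nat -> R) (c : R) (r : posreal).
Hypothesis ex_series_b : ex_series b.
Hypothesis f'_dominated : forall j y, Boule c r y -> Rabs (f' j y) <= b j.

Lemma CVU_series_dominated :
  CVU (fun n y => sum_n (fun j => f' j y) n) (fun y => Series (fun j => f' j y)) c r.
Proof.
  intros eps Heps.
  assert (Htail : is_lim_seq (sum_n b) (Series b)) by (apply Series_correct, ex_series_b).
  apply is_lim_seq_Reals in Htail. destruct (Htail eps Heps) as [N HN].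
  exists N. intros n y Hn Hy.
  eapply Rle_lt_trans; [apply (Series_tail_le _ b); auto |].
  specialize (HN n Hn). unfold Rdist in HN. rewrite Rabs_minus_sym in HN.
  eapply Rle_lt_trans; [apply Rle_abs | exact HN].
Qed.

Lemma is_derive_Series :
  (forall y, Boule c r y -> ex_series (fun j => f j y)) ->
  (forall j y, Boule c r y -> is_derive (f j) y (f' j y)) ->
  is_derive (fun y => Series (fun j => f j y)) c (Series (fun j => f' j c)).
Proof.
  intros Hf Hder. apply is_derive_Reals.
  apply (CVU_derivable (fun n y => sum_n (fun j => f j y) n) (fun n y => sum_n (fun j => f' j y) n)
           _ (fun y => Series (fun j => f' j y)) c r).
  - apply CVU_series_dominated.
  - intros y Hy. apply is_lim_seq_Reals, Series_correct, Hf, Hy.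
  - intros n y Hy. apply is_derive_Reals.
    apply (is_derive_sum_n (V := R_NormedModule) f). intros j _. apply Hder, Hy.
  - unfold Boule. rewrite Rminus_diag, Rabs_R0. apply cond_pos.
Qed.

End TermwiseDerivative.

Lemma INR_S_pos (n : nat) : 0 < INR (S n).
Proof. apply lt_0_INR; lia. Qed.

Lemma is_series_inv_succ_telescope :
  is_series (fun j => / INR (S j) - / INR (S (S j))) 1.
Proof.
  apply is_series_Reals, is_lim_seq_Reals.
  apply (is_lim_seq_ext (fun n => 1 - / INR (S (S n)))).
  { induction n as [|n IH]; [simpl; lra |].
    rewrite tech5, <- IH. ring. }
  assert (Hinv : is_lim_seq (fun n => / INR (S (S n))) 0).
  { apply (is_lim_seq_inv _ p_infty); [| discriminate].
    apply (is_lim_seq_ext (fun n => INR (n + 2))); [intros n; f_equal; lia |].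
    exact (proj1 (is_lim_seq_incr_n INR 2 p_infty) is_lim_seq_INR). }
  replace (Finite 1) with (Finite (1 - 0)) by (f_equal; ring).
  exact (is_lim_seq_minus' _ _ _ _ (is_lim_seq_const 1) Hinv).
Qed.

Lemma ex_series_inv_succ_sq : ex_series (fun j => / INR (S j) ^ 2).
Proof.
  apply (ex_series_Rabs_le _ (fun j => 2 * (/ INR (S j) - / INR (S (S j))))).
  - intros j. rewrite (S_INR (S j)). pose proof (INR_S_pos j) as Hj.
    assert (1 <= INR (S j)) by (rewrite S_INR; pose proof (pos_INR j); lra).
    rewrite Rabs_pos_eq by (left; apply Rinv_0_lt_compat, pow_lt, Hj).
    apply (Rmult_le_reg_r (INR (S j) ^ 2 * (INR (S j) + 1))); [nra |].
    field_simplify; [nra | lra | lra].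
  - apply (ex_series_scal_l (V := R_NormedModule)). exists 1. exact is_series_inv_succ_telescope.
Qed.

Lemma is_series_zetaE1 (q : R) : 0 < q ->
  is_series (fun n => (-1) ^ n / (INR n + q)) (zetaE1 q).
Proof.
  intros Hq.
  assert (Hdecr : Un_decreasing (fun n => / (INR n + q))).
  { intros n. rewrite S_INR. pose proof (pos_INR n). apply Rinv_le_contravar; lra. }
  assert (Hlim : Un_cv (fun n => / (INR n + q)) 0).
  { apply is_lim_seq_Reals, (is_lim_seq_inv _ p_infty); [| discriminate].
    eapply is_lim_seq_plus; [apply is_lim_seq_INR | apply is_lim_seq_const | reflexivity]. }
  destruct (alternated_series _ Hdecr Hlim) as [l Hl].
  assert (Hl' : is_series (fun n => (-1) ^ n / (INR n + q)) l) by (apply is_series_Reals, Hl).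
  unfold zetaE1. rewrite (is_series_unique _ _ Hl'). exact Hl'.
Qed.

Definition psi_term (x : R) (j : nat) : R :=
  (-1) ^ (j + 1) * (1 / INR (j + 1) - 1 / (INR (j + 1) + x)).

Lemma is_series_psi_term (q : R) : 0 < q ->
  is_series (psi_term q) (psit q + 1 / q - gamma0t).
Proof.
  intros Hq.
  assert (Hshift : is_series (fun n => (-1) ^ S n / (INR (S n) + q)) (zetaE1 q - 1 / q)).
  { apply (is_series_incr_1 (fun n => (-1) ^ n / (INR n + q))).
    match goal with |- is_series _ ?v => replace v with (zetaE1 q) end.
    - apply is_series_zetaE1, Hq.
    - unfold plus; simpl. field. lra. }
  pose proof (is_series_minus _ _ _ _ (is_series_opp _ _ (is_series_zetaE1 1 Rlt_0_1)) Hshift) as H.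
  unfold psit, gamma0t. replace (- zetaE1 q + 1 / q - zetaE1 1) with (plus (opp (zetaE1 1)) (opp (zetaE1 q - 1 / q)))
    by (unfold plus, opp; simpl; ring).
  refine (is_series_ext _ _ _ _ H). intros n.
  unfold psi_term, plus, opp; cbv beta. rewrite Nat.add_1_r, !S_INR. simpl.
  pose proof (pos_INR n). field. lra.
Qed.

Lemma ln_le_sub_1 (y : R) : 0 < y -> ln y <= y - 1.
Proof. intros Hy. pose proof (exp_ineq1_le (ln y)). rewrite exp_ln in H by exact Hy. lra. Qed.

Lemma Rabs_ln_1p_sub_le (t : R) : 0 <= t -> Rabs (ln (1 + t) - t) <= t ^ 2.
Proof.
  intros Ht.
  assert (Hup : ln (1 + t) <= t) by (pose proof (ln_le_sub_1 (1 + t)); lra).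
  assert (Hlow : t / (1 + t) <= ln (1 + t)).
  { pose proof (ln_le_sub_1 (/ (1 + t)) ltac:(apply Rinv_0_lt_compat; lra)) as H.
    rewrite ln_Rinv in H by lra.
    replace (t / (1 + t)) with (- (/ (1 + t) - 1)) by (field; lra). lra. }
  assert (t - t / (1 + t) <= t ^ 2).
  { replace (t - t / (1 + t)) with (t ^ 2 / (1 + t)) by (field; lra).
    apply (Rmult_le_reg_r (1 + t)); [lra |]. field_simplify; nra. }
  rewrite Rabs_left1; lra.
Qed.

Definition log_gfactor (x : R) (j : nat) : R :=
  (-1) ^ j * (ln (1 + x / INR (S j)) - x / INR (S j)).

Definition log_product (x : R) : R := Series (log_gfactor x).

Lemma pow_m1_even (j : nat) : (-1) ^ j = if Nat.even j then 1 else -1.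
Proof.
  induction j as [|j IH]; [reflexivity |].
  rewrite Nat.even_succ, <- Nat.negb_even. simpl. rewrite IH.
  destruct (Nat.even j); simpl; ring.
Qed.

Lemma gfactor_exp (x : R) (j : nat) : 0 <= x -> gfactor x (S j) = exp (log_gfactor x j).
Proof.
  intros Hx. unfold gfactor, log_gfactor. pose proof (INR_S_pos j) as Hj.
  set (t := x / INR (S j)).
  assert (Ht : 0 <= t) by (apply Rdiv_le_0_compat; lra).
  replace (exp (- x / INR (S j)) * (1 + t)) with (exp (ln (1 + t) - t)).
  2:{ unfold Rminus. rewrite exp_plus, exp_ln by lra. unfold t, Rdiv. rewrite Ropp_mult_distr_l. ring. }
  rewrite pow_m1_even, Nat.even_succ, <- Nat.negb_even.
  destruct (Nat.even j); simpl.
  - rewrite Rmult_1_r, Rmult_1_l. reflexivity.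
  - rewrite Rmult_1_r, <- exp_Ropp. f_equal. ring.
Qed.

Lemma gprod_exp (x : R) (n : nat) : 0 <= x -> gprod x (S n) = exp (sum_n (log_gfactor x) n).
Proof.
  intros Hx. induction n as [|n IH].
  - rewrite sum_O. simpl. rewrite Rmult_1_l. apply gfactor_exp, Hx.
  - change (gprod x (S (S n))) with (gprod x (S n) * gfactor x (S (S n))).
    rewrite IH, gfactor_exp, sum_Sn, <- exp_plus by exact Hx. reflexivity.
Qed.

Lemma Rabs_log_gfactor_le (x : R) (j : nat) : 0 <= x ->
  Rabs (log_gfactor x j) <= x ^ 2 * / INR (S j) ^ 2.
Proof.
  intros Hx. unfold log_gfactor. rewrite Rabs_mult, pow_1_abs, Rmult_1_l.
  pose proof (INR_S_pos j).
  replace (x ^ 2 * / INR (S j) ^ 2) with ((x / INR (S j)) ^ 2) by (field; lra).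
  apply Rabs_ln_1p_sub_le, Rdiv_le_0_compat; lra.
Qed.

Lemma ex_series_log_gfactor (x : R) : 0 <= x -> ex_series (log_gfactor x).
Proof.
  intros Hx. apply (ex_series_Rabs_le _ (fun j => x ^ 2 * / INR (S j) ^ 2)).
  - intros j. apply Rabs_log_gfactor_le, Hx.
  - apply (ex_series_scal_l (V := R_NormedModule)), ex_series_inv_succ_sq.
Qed.

Lemma is_lim_seq_gprod (x : R) : 0 <= x -> is_lim_seq (gprod x) (exp (log_product x)).
Proof.
  intros Hx. apply is_lim_seq_incr_1.
  apply (is_lim_seq_ext (fun n => exp (sum_n (log_gfactor x) n))).
  { intros n. symmetry. apply gprod_exp, Hx. }
  apply (is_lim_seq_continuous exp).
  - apply derivable_continuous_pt, derivable_pt_exp.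
  - apply Series_correct, ex_series_log_gfactor, Hx.
Qed.

Lemma Gammat_exp (x : R) : 0 < x -> Gammat x = / x * exp (gamma0t * x) * exp (log_product x).
Proof.
  intros Hx. unfold Gammat. rewrite (is_lim_seq_unique _ _ (is_lim_seq_gprod x ltac:(lra))).
  reflexivity.
Qed.

Lemma Gammat_pos (x : R) : 0 < x -> 0 < Gammat x.
Proof.
  intros Hx. rewrite Gammat_exp by exact Hx.
  pose proof (Rinv_0_lt_compat _ Hx). pose proof (exp_pos (gamma0t * x)).
  pose proof (exp_pos (log_product x)). apply Rmult_lt_0_compat; [apply Rmult_lt_0_compat |]; assumption.
Qed.

Lemma ln_Gammat (x : R) : 0 < x -> ln (Gammat x) = - ln x + gamma0t * x + log_product x.
Proof.
  intros Hx. rewrite Gammat_exp by exact Hx.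
  pose proof (Rinv_0_lt_compat _ Hx). pose proof (exp_pos (gamma0t * x)).
  pose proof (exp_pos (log_product x)).
  rewrite !ln_mult, !ln_exp, ln_Rinv; auto using Rmult_lt_0_compat.
Qed.

Lemma is_derive_log_gfactor (x : R) (j : nat) : 0 < INR (S j) + x ->
  is_derive (fun y => log_gfactor y j) x (psi_term x j).
Proof.
  intros Hx. unfold log_gfactor, psi_term. rewrite Nat.add_1_r.
  pose proof (INR_S_pos j) as Hj. revert Hj Hx. generalize (INR (S j)). intros a Ha Hax.
  assert (H1 : 0 < 1 + x / a) by (replace (1 + x / a) with ((a + x) / a) by (field; lra);
                                   apply Rdiv_lt_0_compat; assumption).
  auto_derive; [exact H1 |]. simpl.
  field. split; lra.
Qed.

Lemma Rabs_psi_term_le (y : R) (j : nat) : 0 <= y -> Rabs (psi_term y j) <= y * / INR (S j) ^ 2.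
Proof.
  intros Hy. unfold psi_term. rewrite Rabs_mult, pow_1_abs, Rmult_1_l, Nat.add_1_r.
  pose proof (INR_S_pos j) as Hj. set (a := INR (S j)) in *.
  replace (1 / a - 1 / (a + y)) with (y / (a * (a + y))) by (field; lra).
  assert (0 < a * (a + y)) by (apply Rmult_lt_0_compat; lra).
  rewrite Rabs_pos_eq by (apply Rdiv_le_0_compat; lra).
  unfold Rdiv. apply Rmult_le_compat_l; [exact Hy |].
  apply Rinv_le_contravar; nra.
Qed.

Lemma is_derive_log_product (q : R) : 0 < q ->
  is_derive log_product q (psit q + 1 / q - gamma0t).
Proof.
  intros Hq. rewrite <- (is_series_unique _ _ (is_series_psi_term q Hq)).
  set (r := mkposreal (q / 2) ltac:(lra)).
  assert (Hball : forall y, Boule q r y -> q / 2 < y < 3 * q / 2).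
  { intros y Hy. unfold Boule in Hy. simpl in Hy. apply Rabs_def2 in Hy. lra. }
  apply (is_derive_Series (fun j y => log_gfactor y j) (fun j y => psi_term y j)
           (fun j => 3 * q / 2 * / INR (S j) ^ 2) q r).
  - apply (ex_series_scal_l (V := R_NormedModule)), ex_series_inv_succ_sq.
  - intros j y Hy. apply Hball in Hy.
    eapply Rle_trans; [apply Rabs_psi_term_le; lra |].
    apply Rmult_le_compat_r; [left; apply Rinv_0_lt_compat, pow_lt, INR_S_pos | lra].
  - intros y Hy. apply Hball in Hy. apply ex_series_log_gfactor. lra.
  - intros j y Hy. apply Hball in Hy. apply is_derive_log_gfactor.
    pose proof (INR_S_pos j). lra.
Qed.

Theorem theorem3p12 :
  forall q : R, 0 < q ->
    (* psi~(q) = -1/q + gamma~_0 + sum_{k>=1} (-1)^k (1/k - 1/(k+q)); index k = j+1 *)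
    is_series (fun j : nat => (-1) ^ (j + 1) * (1 / INR (j + 1) - 1 / (INR (j + 1) + q)))
              (psit q + 1 / q - gamma0t)
    (* the infinite product converges, Gamma~(q) > 0, and psi~ = d/dq log Gamma~ *)
    /\ ex_finite_lim_seq (gprod q)
    /\ 0 < Gammat q
    /\ is_derive (fun x : R => ln (Gammat x)) q (psit q).
Proof.
  intros q Hq. split; [| split; [| split]].
  - exact (is_series_psi_term q Hq).
  - exists (exp (log_product q)). apply is_lim_seq_gprod. lra.
  - exact (Gammat_pos q Hq).
  - apply (is_derive_ext_loc (fun x => - ln x + gamma0t * x + log_product x)).
    { exists (mkposreal q Hq). intros y Hy. change (Rabs (y - q) < q) in Hy.
      apply Rabs_def2 in Hy. symmetry. apply ln_Gammat. lra. }
    replace (psit q) with (- / q + gamma0t + (psit q + 1 / q - gamma0t)) by (field; lra).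
    apply (is_derive_plus (fun x => - ln x + gamma0t * x)).
    + auto_derive; [exact Hq | ring].
    + apply is_derive_log_product, Hq.
Qed.
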